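(* Let $k\ge2$. Then $\operatorname{ZIR}(N_k)=2k=\frac12|V(N_k)|$.
   Context: The $k$th necklace $N_k$: take $k$ disjoint diamonds (a diamond is $K_4$ minus an edge), the $i$th having vertices $a_i,b_i,c_i,d_i$ with all edges among them except $a_ic_i$; add the edges $c_ia_{i+1}$ for $1\le i\le k-1$ and $c_ka_1$. A nonempty $F\subseteq V(G)$ is a fort if every $v\notin F$ has $|N(v)\cap F|\ne1$. A private fort of $x\in S$ relative to $S$ is a fort $F$ with $S\cap F=\{x\}$; $S$ is a ZIr-set if every element of $S$ has a private fort. $\operatorname{ZIR}(G)$ is the maximum cardinality of an inclusion-maximal ZIr-set. *)

From mathcomp Require Import all_boot.
Set Implicit Arguments. Unset Strict Implicit. Unset Printing Implicit Defensive.

(* A graph is given by a finite vertex type T and an adjacency relation e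
   (intended symmetric and irreflexive). *)
Section Zero.
Variables (T : finType) (e : rel T).

Definition nbhd (v : T) : {set T} := [set u | e v u].

Definition is_fort (F : {set T}) : bool :=
  (F != set0) && [forall v, (v \notin F) ==> (#|nbhd v :&: F| != 1)].

Definition private_fort (S : {set T}) (x : T) (F : {set T}) : bool :=
  is_fort F && (S :&: F == [set x]).

Definition ZIr_set (S : {set T}) : bool :=
  [forall x in S, [exists F : {set T}, private_fort S x F]].

Definition ZIR : nat := \max_(S : {set T} | maxset ZIr_set S) #|S|.
End Zero.

(* The k-th necklace N_k: vertex (i, r) with i : 'I_k the diamond index and
   r : 'I_4 the role, 0 = a_i, 1 = b_i, 2 = c_i, 3 = d_i.  Diamond i has all
   edges among its four vertices except a_i c_i; plus edges c_i a_{i+1}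
   (indices mod k, so c_k a_1 is included). *)
Definition necklace_adj (k : nat) (x y : 'I_k * 'I_4) : bool :=
  let: (i, p) := x in let: (j, q) := y in
  [&& i == j, p != q, ~~ ((val p == 0) && (val q == 2))
                    & ~~ ((val p == 2) && (val q == 0))]
  || [&& val p == 2, val q == 0 & val j == (val i).+1 %% k]
  || [&& val p == 0, val q == 2 & val i == (val j).+1 %% k].

From mathcomp Require Import all_boot.
Set Implicit Arguments. Unset Strict Implicit. Unset Printing Implicit Defensive.

(* Upper bound: the fort condition at the eight vertices of two consecutive
   diamonds involves only those vertices and their outer neighbours c_{i-1}
   and a_{i+2}.  Restricting a ZIr-set S and the private forts of its elements
   to such a window gives a finite problem, settled by enumeration: S contains
   at most four vertices of any two consecutive diamonds.  Summing over the k
   windows yields 2|S| <= 4k.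
   Lower bound: the set of all a_i and b_i is a ZIr-set of size 2k, with
   private forts {b_i, d_i} for b_i and {a_i} together with every c_j and
   every d_j, j <> i, for a_i; by the upper bound it is inclusion-maximal. *)

Section ZeroForcing.
Variables (T : finType) (e : rel T).

Lemma fort_outside (F : {set T}) v :
  is_fort e F -> (v \in F) || (#|nbhd e v :&: F| != 1).
Proof. by case/andP=> _ /forallP/(_ v); case: (v \in F). Qed.

Lemma ZIR_eq (m : nat) :
  (forall S, ZIr_set e S -> #|S| <= m) ->
  (exists2 S, ZIr_set e S & #|S| = m) -> ZIR e = m.
Proof.
move=> ZIr_le [S ZS cardS]; apply/eqP; rewrite eqn_leq; apply/andP; split.
  by apply/bigmax_leqP=> B /maxsetP[ZB _]; exact: ZIr_le.
have maxS : maxset (ZIr_set e) S.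
  apply/maxsetP; split=> // B ZB sSB; apply/eqP.
  by rewrite eq_sym eqEcard sSB cardS ZIr_le.
by rewrite -cardS; exact: (leq_bigmax_cond _ maxS).
Qed.

End ZeroForcing.

Lemma card_set3I (T : finType) (x y z : T) (F : {set T}) : uniq [:: x; y; z] ->
  #|[set x; y; z] :&: F| = (x \in F) + (y \in F) + (z \in F).
Proof.
move=> xyz_uniq.
have -> : #|[set x; y; z] :&: F| = #|filter (mem F) [:: x; y; z]|.
  by apply: eq_card=> u; rewrite !inE mem_filter !inE andbC orbA.
by rewrite (card_uniqP _) ?filter_uniq // size_filter /= addn0 addnA.
Qed.

Fixpoint bitseqs (n : nat) : seq bitseq :=
  if n is n'.+1 then [seq b :: s | b <- [:: true; false], s <- bitseqs n']
  else [:: [::]].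

Lemma mem_bitseqs n (s : bitseq) : size s = n -> s \in bitseqs n.
Proof.
elim: n s => [|n IHn] [|b s] //= [/IHn s_in].
by case: b; rewrite /= !mem_cat map_f ?orbT.
Qed.

Definition not_one (a b c : bool) : bool := (a + b + c != 1)%N.

(* Bits 0-7 of a window stand for a_i, b_i, c_i, d_i, a_{i+1}, b_{i+1},
   c_{i+1}, d_{i+1}, bits 8 and 9 for c_{i-1} and a_{i+2}. *)
Definition local_fort (w : bitseq) : bool :=
  if w is [:: a; b; c; d; a'; b'; c'; d'; c0; a''] then
    [&& a || not_one b d c0, b || not_one a c d, c || not_one b d a',
        d || not_one a b c, a' || not_one b' d' c, b' || not_one a' c' d',
        c' || not_one b' d' a'' & d' || not_one a' b' c']
  else false.

Definition local_forts : seq bitseq := filter local_fort (bitseqs 10).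

Definition local_private (s : bitseq) (x : nat) : bool :=
  has (fun w => nth false w x &&
       all (fun y => (y == x) || ~~ (nth false s y && nth false w y)) (iota 0 8))
    local_forts.

Definition local_ZIr (s : bitseq) : bool :=
  all (fun x => nth false s x ==> local_private s x) (iota 0 8).

Lemma local_ZIr_count s : size s = 8 -> local_ZIr s -> count id s <= 4.
Proof.
move=> /mem_bitseqs s_in; apply/implyP; move: s s_in; apply/allP.
by vm_compute.
Qed.

Definition ra : 'I_4 := @Ordinal 4 0 isT.
Definition rb : 'I_4 := @Ordinal 4 1 isT.
Definition rc : 'I_4 := @Ordinal 4 2 isT.
Definition rd : 'I_4 := @Ordinal 4 3 isT.

Lemma roleP (P : 'I_4 -> Prop) : P ra -> P rb -> P rc -> P rd -> forall r, P r.
Proof.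
by move=> Pa Pb Pc Pd [[|[|[|[|r]]]] r_lt] //; rewrite (bool_irrelevance r_lt isT).
Qed.

Lemma sum_roles (g : 'I_4 -> nat) : \sum_r g r = g ra + g rb + g rc + g rd.
Proof.
rewrite !big_ord_recl big_ord0 addn0 !addnA.
by congr (_ + _ + _ + _); congr g; apply: val_inj.
Qed.

Section Necklace.
Variable k : nat.
Local Notation V := ('I_k * 'I_4)%type.
Local Notation e := (@necklace_adj k).

Lemma val_eq_succ (i j : 'I_k) : (val i == (val j).+1 %% k) = (j == ord_pred i).
Proof. by rewrite -(inj_eq (@ordS_inj k)) ord_predK eq_sym. Qed.

Lemma nbhd_a i : nbhd e (i, ra) = [set (i, rb); (i, rd); (ord_pred i, rc)].
Proof.
apply/setP=> -[j r]; rewrite !inE /necklace_adj !xpair_eqE.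
by move: r; apply: roleP; rewrite /= ?val_eq_succ ?(eq_sym i) ?andbF ?andbT ?orbF.
Qed.

Lemma nbhd_b i : nbhd e (i, rb) = [set (i, ra); (i, rc); (i, rd)].
Proof.
apply/setP=> -[j r]; rewrite !inE /necklace_adj !xpair_eqE.
by move: r; apply: roleP; rewrite /= ?(eq_sym i) ?andbF ?andbT ?orbF.
Qed.

Lemma nbhd_c i : nbhd e (i, rc) = [set (i, rb); (i, rd); (ordS i, ra)].
Proof.
apply/setP=> -[j r]; rewrite !inE /necklace_adj !xpair_eqE.
by move: r; apply: roleP; rewrite /= ?(eq_sym i) ?andbF ?andbT ?orbF.
Qed.

Lemma nbhd_d i : nbhd e (i, rd) = [set (i, ra); (i, rb); (i, rc)].
Proof.
apply/setP=> -[j r]; rewrite !inE /necklace_adj !xpair_eqE.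
by move: r; apply: roleP; rewrite /= ?(eq_sym i) ?andbF ?andbT ?orbF.
Qed.

Lemma card_nbhdI_a (F : {set V}) i :
  #|nbhd e (i, ra) :&: F| = ((i, rb) \in F) + ((i, rd) \in F) + ((ord_pred i, rc) \in F).
Proof. by rewrite nbhd_a card_set3I //= !inE !xpair_eqE !andbF. Qed.

Lemma card_nbhdI_b (F : {set V}) i :
  #|nbhd e (i, rb) :&: F| = ((i, ra) \in F) + ((i, rc) \in F) + ((i, rd) \in F).
Proof. by rewrite nbhd_b card_set3I //= !inE !xpair_eqE !andbF. Qed.

Lemma card_nbhdI_c (F : {set V}) i :
  #|nbhd e (i, rc) :&: F| = ((i, rb) \in F) + ((i, rd) \in F) + ((ordS i, ra) \in F).
Proof. by rewrite nbhd_c card_set3I //= !inE !xpair_eqE !andbF. Qed.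

Lemma card_nbhdI_d (F : {set V}) i :
  #|nbhd e (i, rd) :&: F| = ((i, ra) \in F) + ((i, rb) \in F) + ((i, rc) \in F).
Proof. by rewrite nbhd_d card_set3I //= !inE !xpair_eqE !andbF. Qed.

Lemma ordS_neq (k_gt1 : 1 < k) (i : 'I_k) : ordS i != i.
Proof.
rewrite -val_eqE /=; case: (ltnP i.+1 k) => [i1_lt | k_le].
  by rewrite modn_small // neq_ltn ltnSn orbT.
have i1_eq : i.+1 = k by apply/eqP; rewrite eqn_leq k_le ltn_ord.
by rewrite i1_eq modnn eq_sym -lt0n -ltnS i1_eq.
Qed.

Definition window (i : 'I_k) : seq V :=
  [:: (i, ra); (i, rb); (i, rc); (i, rd);
      (ordS i, ra); (ordS i, rb); (ordS i, rc); (ordS i, rd)].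

(* For k = 2 the two outer vertices repeat inner ones; only the inner eight
   need to be distinct. *)
Definition window_ext (i : 'I_k) : seq V :=
  window i ++ [:: (ord_pred i, rc); (ordS (ordS i), ra)].

Lemma uniq_window (k_gt1 : 1 < k) i : uniq (window i).
Proof.
rewrite /= !inE !xpair_eqE !(eq_sym i (ordS i)) !(negbTE (ordS_neq k_gt1 i)).
by rewrite !andbF.
Qed.

Lemma nth_window_ext (A : {set V}) i x : x < 8 ->
  nth false [seq v \in A | v <- window_ext i] x = (nth (i, ra) (window i) x \in A).
Proof. by move=> x_lt; rewrite (nth_map (i, ra)) ?nth_cat ?x_lt // size_cat ltn_addr. Qed.

Lemma local_fort_window (F : {set V}) i :
  is_fort e F -> local_fort [seq v \in F | v <- window_ext i].
Proof.
move=> F_fort; have out v := fort_outside v F_fort.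
do !(apply/andP; split).
- by have := out (i, ra); rewrite card_nbhdI_a.
- by have := out (i, rb); rewrite card_nbhdI_b.
- by have := out (i, rc); rewrite card_nbhdI_c.
- by have := out (i, rd); rewrite card_nbhdI_d.
- by have := out (ordS i, ra); rewrite card_nbhdI_a ordSK.
- by have := out (ordS i, rb); rewrite card_nbhdI_b.
- by have := out (ordS i, rc); rewrite card_nbhdI_c.
- by have := out (ordS i, rd); rewrite card_nbhdI_d.
Qed.

Lemma local_ZIr_window (k_gt1 : 1 < k) (S : {set V}) i :
  ZIr_set e S -> local_ZIr [seq v \in S | v <- window i].
Proof.
move=> S_ZIr; apply/allP=> x; rewrite mem_iota add0n => /andP[_ x_lt].
set v := nth (i, ra) (window i) x.
rewrite (nth_map (i, ra)) // -/v; apply/implyP=> vS.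
move: (implyP (forallP S_ZIr v) vS) => /existsP[F /andP[F_fort /eqP SIF]].
apply/hasP; exists [seq u \in F | u <- window_ext i].
  by rewrite mem_filter local_fort_window // mem_bitseqs // size_map.
have inSIF u : (u \in S) && (u \in F) = (u == v) by rewrite -in_setI SIF inE.
rewrite nth_window_ext //; apply/andP; split.
  by have := inSIF v; rewrite eqxx => /andP[].
apply/allP=> y; rewrite mem_iota add0n => /andP[_ y_lt].
rewrite (nth_map (i, ra)) // nth_window_ext // inSIF orbC -implybE.
by rewrite /v nth_uniq ?uniq_window ?implybb.
Qed.

Definition diamond_count (S : {set V}) (i : 'I_k) : nat :=
  ((i, ra) \in S) + ((i, rb) \in S) + ((i, rc) \in S) + ((i, rd) \in S).

Lemma card_diamond_sum (S : {set V}) : #|S| = \sum_i diamond_count S i.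
Proof.
rewrite -sum1_card big_mkcond (eq_bigr (fun v => if (v.1, v.2) \in S then 1 else 0)).
  rewrite -(pair_bigA _ (fun i r => if (i, r) \in S then 1 else 0)) /=.
  apply: eq_bigr => i _; rewrite sum_roles /diamond_count.
  by case: ((i, ra) \in S); case: ((i, rb) \in S); case: ((i, rc) \in S); case: ((i, rd) \in S).
by case.
Qed.

Lemma ZIr_window_count (k_gt1 : 1 < k) (S : {set V}) i :
  ZIr_set e S -> diamond_count S i + diamond_count S (ordS i) <= 4.
Proof.
move=> S_ZIr; have := local_ZIr_count _ (local_ZIr_window k_gt1 i S_ZIr).
by rewrite size_map /= /diamond_count !addnA addn0; apply.
Qed.

Lemma ZIr_card_le (k_gt1 : 1 < k) (S : {set V}) : ZIr_set e S -> #|S| <= 2 * k.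
Proof.
move=> S_ZIr; rewrite -(leq_pmul2l (isT : 0 < 2)) mulnA.
have -> : 2 * #|S| = \sum_i (diamond_count S i + diamond_count S (ordS i)).
  have shift : \sum_i diamond_count S (ordS i) = \sum_i diamond_count S i.
    by rewrite [RHS](reindex_inj (@ordS_inj k)).
  by rewrite big_split /= shift -card_diamond_sum mul2n addnn.
apply: (@leq_trans (\sum_(i < k) 4)).
  by apply: leq_sum => i _; exact: ZIr_window_count.
by rewrite sum_nat_const card_ord mulnC.
Qed.

Definition ab_set : {set V} := [set v | val v.2 < 2].

Definition fort_b (i : 'I_k) : {set V} := [set (i, rb); (i, rd)].

Definition fort_a (i : 'I_k) : {set V} :=
  [set v | (v == (i, ra)) || (val v.2 == 2) || (val v.2 == 3) && (v.1 != i)].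

Lemma is_fort_b i : is_fort e (fort_b i).
Proof.
apply/andP; split; first by apply/set0Pn; exists (i, rb); rewrite !inE eqxx.
apply/forallP=> -[j r]; apply/implyP; move: r; apply: roleP;
  rewrite ?card_nbhdI_a ?card_nbhdI_b ?card_nbhdI_c ?card_nbhdI_d !inE !xpair_eqE;
  rewrite ?andbF ?andbT ?orbF; by case: (j == i).
Qed.

Lemma is_fort_a i : is_fort e (fort_a i).
Proof.
apply/andP; split; first by apply/set0Pn; exists (i, ra); rewrite !inE eqxx.
apply/forallP=> -[j r]; apply/implyP; move: r; apply: roleP;
  rewrite ?card_nbhdI_a ?card_nbhdI_b ?card_nbhdI_c ?card_nbhdI_d !inE !xpair_eqE /=;
  rewrite ?andbF ?andbT ?orbF ?orbT; by case: (j == i).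
Qed.

Lemma ZIr_ab_set : ZIr_set e ab_set.
Proof.
apply/forallP=> -[i r]; apply/implyP; move: r; apply: roleP; rewrite inE //= => _.
- apply/existsP; exists (fort_a i); rewrite /private_fort is_fort_a /=.
  apply/eqP/setP=> -[j r]; move: r; apply: roleP; rewrite !inE !xpair_eqE /=;
  rewrite ?andbF ?andbT ?orbF ?orbT; by case: (j == i).
- apply/existsP; exists (fort_b i); rewrite /private_fort is_fort_b /=.
  apply/eqP/setP=> -[j r]; move: r; apply: roleP; rewrite !inE !xpair_eqE /=;
  rewrite ?andbF ?andbT ?orbF ?orbT; by case: (j == i).
Qed.

Lemma card_ab_set : #|ab_set| = 2 * k.
Proof.
rewrite card_diamond_sum (eq_bigr (fun=> 2)) => [|i _]; last by rewrite /diamond_count !inE.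
by rewrite sum_nat_const card_ord mulnC.
Qed.

End Necklace.

Theorem theorem4p4 (k : nat) (hk : 2 <= k) :
  ZIR (@necklace_adj k) = 2 * k /\ 2 * k = #|{: 'I_k * 'I_4}| %/ 2.
Proof.
split.
  apply: ZIR_eq => [S|]; first exact: ZIr_card_le.
  by exists (ab_set k); [exact: ZIr_ab_set | exact: card_ab_set].
by rewrite card_prod !card_ord (mulnC k) -[4]/(2 * 2) -mulnA mulKn.
Qed.
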